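(* Let $q$ be a power of $2$, $s\ge2$, and $n\ge s$ integers with $d_{\max\text{-}iso}(q;[n,s])\ge1$; let $\pi:\mathbb{F}_{q^s}\to\mathbb{F}_q^n$ be an isometry whose image $\pi(\mathbb{F}_{q^s})$ is an $[n,s,d]_q$ code with $d=d_{\max\text{-}iso}(q;[n,s])$. Let $a,b\in\mathbb{F}_{q^s}$ with $b\neq0$ and let $N\ge2$. Let $r\ge0$ be such that $2^r$ divides $N+1$ but $2^{r+1}$ does not, let $N+1=2^r(m+1)$, and let $\theta\in\overline{\mathbb{F}}_q$ be a primitive $(m+1)$-th root of unity. Assume: if $r=0$, then $a/b\notin\{1/b+\theta^i+\theta^{-i}:1\le i\le m/2\}$; if $r\ge1$ and $m=0$, then $a\ne1$; if $r\ge1$ and $m\ge1$, then $a/b\notin\{1/b\}\cup\{1/b+\theta^i+\theta^{-i}:1\le i\le m/2\}$. Then $\pi^{\otimes 2N}(\hat C_N(a,b))$ is an LCD code over $\mathbb{F}_q$ with parameters $[2nN,sN,D^*]_q$, where $D^*\ge dD$ and $D$ is the minimum distance of $\hat C_N(a,b)$.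
   Context: For a field $K$, $a,b\in K$ and $N\ge 2$, $\hat T_N(a,b)$ is the $N\times N$ symmetric tridiagonal Toeplitz matrix with diagonal entries $a$, first super- and sub-diagonal entries $b$, other entries $0$; $\hat C_N(a,b)$ is the $[2N,N]$ linear code over $K$ (here $K=\mathbb{F}_{q^s}$) with generator matrix $[I_N\mid\hat T_N(a,b)]$. A linear code $C$ is LCD if $C\cap C^\perp=\{0\}$ (Euclidean dual). An $\mathbb{F}_q$-linear map $\pi:\mathbb{F}_{q^s}\to\mathbb{F}_q^n$ ($n\ge s\ge2$) is an isometry if there is an $\mathbb{F}_q$-basis $(e_1,\dots,e_s)$ of $\mathbb{F}_{q^s}$ with trace-dual basis $(e'_1,\dots,e'_s)$ such that $\pi(e_i)\cdot\pi(e'_j)=\delta_{ij}$ for all $i,j$ (standard inner product on $\mathbb{F}_q^n$). $d_{\max\text{-}iso}(q;[n,s])$ is the largest $d$ such that some isometry $\pi:\mathbb{F}_{q^s}\to\mathbb{F}_q^n$ has image $\pi(\mathbb{F}_{q^s})$ (an $[n,s]_q$ code) of minimum distance $d$. The map $\pi^{\otimes 2N}:\mathbb{F}_{q^s}^{2N}\to\mathbb{F}_q^{2Nn}$ is $(c_1,\dots,c_{2N})\mapsto(\pi(c_1),\dots,\pi(c_{2N}))$. *)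

From HB Require Import structures.
From mathcomp Require Import all_boot all_order all_algebra all_field.
Set Implicit Arguments. Unset Strict Implicit. Unset Printing Implicit Defensive.
Import GRing.Theory.
Local Open Scope ring_scope.

Definition wt (R : zmodType) (m : nat) (v : 'rV[R]_m) : nat :=
  #|[set i : 'I_m | v 0 i != 0]|.

Definition is_min_dist (R : zmodType) (m : nat) (C : 'rV[R]_m -> Prop) (d : nat) : Prop :=
  (exists c, [/\ C c, c != 0 & wt c = d]) /\
  (forall c, C c -> c != 0 -> (d <= wt c)%N).

Definition dotF (F : fieldType) (m : nat) (u v : 'rV[F]_m) : F :=
  \sum_(i < m) u 0 i * v 0 i.

(* Absolute trace Tr_{K/F}(x) = sum_{i < [K:F]} x^(q^i), q = |F|
   (the value lies in the copy of F inside K). *)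
Definition trK (F : finFieldType) (K : fieldExtType F) (x : K) : K :=
  \sum_(i < \dim {:K}) x ^+ (#|F| ^ i).

Definition is_isometry (F : finFieldType) (K : fieldExtType F) (n : nat)
    (pi : K -> 'rV[F]_n) : Prop :=
  exists e e' : (\dim {:K}).-tuple K,
    [/\ basis_of fullv e,
        (forall i j : 'I_(\dim {:K}), trK (tnth e i * tnth e' j) = (i == j)%:R)
      & (forall i j : 'I_(\dim {:K}),
           dotF (pi (tnth e i)) (pi (tnth e' j)) = (i == j)%:R)].

Definition image_code (F : finFieldType) (K : fieldExtType F) (n : nat)
    (pi : K -> 'rV[F]_n) : 'rV[F]_n -> Prop :=
  fun v => exists x, v = pi x.

Definition hatT (K : fieldType) (N : nat) (a b : K) : 'M[K]_N :=
  \matrix_(i < N, j < N)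
     if i == j then a else if ((i.+1 == j) || (j.+1 == i))%N then b else 0.

Arguments hatT {K} N a b.

Definition hatC (K : fieldType) (N : nat) (a b : K) : 'rV[K]_(N + N) -> Prop :=
  fun c => exists u : 'rV[K]_N, c = u *m row_mx 1%:M (hatT N a b).

Definition piT (F : finFieldType) (K : fieldExtType F) (n M : nat)
    (pi : K -> 'rV[F]_n) (c : 'rV[K]_M) : 'rV[F]_(M * n) :=
  mxvec (\matrix_(i < M, k < n) pi (c 0 i) 0 k).

Definition map_code (R S : Type) (f : R -> S) (C : R -> Prop) : S -> Prop :=
  fun v => exists c, C c /\ v = f c.

Definition is_LCD (F : fieldType) (m : nat) (C : 'rV[F]_m -> Prop) : Prop :=
  forall v, C v -> (forall w, C w -> dotF v w = 0) -> v = 0.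
Arguments hatC {K} N a b.

From HB Require Import structures.
From mathcomp Require Import all_boot all_order all_algebra all_field.
From mathcomp Require Import zify ring.
From Stdlib Require Import Classical_Prop.
Import GRing.Theory.
Local Open Scope ring_scope.

Set Implicit Arguments. Unset Strict Implicit.

(* 1. Over K, the Gram matrix of [I | T] is 1 + T^2 = (1 + T)^2 (T symmetric,
      characteristic 2), so \hat C_N(a, b) is LCD once 1 + T is nonsingular.
      The padded entries of a kernel vector of 1 + T obey the Lucas
      recurrence g_(k+2) = x g_(k+1) + g_k, x = (a + 1) / b, so they are
      multiples of U_k(x), and vanish when U_(N+1)(x) != 0.
   2. Writing N + 1 = 2^r (2k + 1), the doubling formulas for U in
      characteristic 2 and the description of the roots of W_k = U_(k+1) + U_k
      as the values theta^i + theta^-i show that the hypotheses on a / b say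
      exactly that U_(N+1)((a + 1) / b) != 0.
   3. An isometry turns the standard inner product into the nondegenerate
      trace form, <pi x, pi y> = Tr(x y); hence pi is injective and the
      coordinatewise expansion of a K-linear LCD code is LCD over F_q.
   4. Expansion maps a K-code with injective encoder to an F_q-code with a
      generator matrix of rank s N (F_q-coordinates in a basis of K), and
      multiplies weights by at least d, giving the distance bound. *)

Section InnerProduct.
Variables (F : fieldType) (m : nat).

Lemma dotF_mx k (u v : 'rV[F]_k) : dotF u v = (u *m v^T) 0 0.
Proof. by rewrite /dotF !mxE; apply: eq_bigr => i _; rewrite !mxE. Qed.

Lemma dotF_mulmxr n (x : 'rV[F]_n) (w : 'rV[F]_m) (G : 'M_(m, n)) :
  dotF x (w *m G) = dotF (x *m G^T) w.
Proof. by rewrite !dotF_mx trmx_mul mulmxA. Qed.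

Lemma dotF_nondeg (x : 'rV[F]_m) :
  (forall w, dotF x w = 0) -> x = 0.
Proof.
move=> xw; apply/rowP => j; rewrite mxE -(xw (delta_mx 0 j)) /dotF.
rewrite (bigD1 j) //= big1 => [|i ij]; first by rewrite mxE !eqxx mulr1 addr0.
by rewrite mxE (negbTE ij) andbF mulr0.
Qed.

Lemma dotFDl (u v w : 'rV[F]_m) :
  dotF (u + v) w = dotF u w + dotF v w.
Proof. by rewrite /dotF -big_split; apply: eq_bigr => i _; rewrite mxE mulrDl. Qed.

Lemma dotFZl c (u w : 'rV[F]_m) : dotF (c *: u) w = c * dotF u w.
Proof. by rewrite /dotF mulr_sumr; apply: eq_bigr => i _; rewrite mxE mulrA. Qed.

Lemma dotFC (u w : 'rV[F]_m) : dotF u w = dotF w u.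
Proof. by rewrite /dotF; apply: eq_bigr => i _; rewrite mulrC. Qed.

End InnerProduct.

Lemma pchar2_add_eq0 (R : nzRingType) (x y : R) :
  2 \in [pchar R] -> x + y = 0 -> x = y.
Proof. by move=> char2 /eqP; rewrite addr_eq0 oppr_pchar2 // => /eqP. Qed.

(* Kernel vectors of 1 + \hat T_N(a, b) obey this
   recurrence with x = (a + 1) / b, which is why U_(N+1)((a + 1) / b)
   governs the invertibility of 1 + \hat T_N(a, b). *)
Fixpoint lucasU (R : pzRingType) (x : R) (k : nat) : R :=
  match k with
  | 0 => 0
  | k1.+1 => match k1 with 0 => 1 | k2.+1 => x * lucasU x k1 + lucasU x k2 end
  end.

Lemma lucasU_SS (R : pzRingType) (x : R) k :
  lucasU x k.+2 = x * lucasU x k.+1 + lucasU x k.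
Proof. by []. Qed.

Lemma lucasU_add (R : comPzRingType) (x : R) m n :
  lucasU x (m + n).+1 = lucasU x m.+1 * lucasU x n.+1 + lucasU x m * lucasU x n.
Proof.
elim/ltn_ind: n => -[|[|n]] IH.
- by rewrite addn0 /= mulr1 mulr0 addr0.
- by rewrite addn1 lucasU_SS /=; ring.
- have IH1 := IH n.+1 (ltnSn _); have IH0 := IH n (ltnW (ltnSn _)).
  rewrite addnS in IH1; rewrite !addnS lucasU_SS IH1 IH0 !lucasU_SS; ring.
Qed.

Definition lucasW (R : pzRingType) (x : R) (k : nat) : R :=
  lucasU x k.+1 + lucasU x k.

Section LucasChar2.
Variables (R : comNzRingType) (x : R).
Hypothesis char2 : 2 \in [pchar R].

(* The doubling formulas, where the cross terms 2 U_(k+1) U_k vanish. *)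
Lemma lucasU_double_odd k : lucasU x (k + k).+1 = lucasW x k ^+ 2.
Proof.
rewrite lucasU_add /lucasW.
transitivity (lucasU x k.+1 ^+ 2 + lucasU x k ^+ 2
              + (lucasU x k.+1 * lucasU x k) * 2%:R); last by ring.
by rewrite (pcharf0 char2) mulr0 addr0 !expr2.
Qed.

Lemma lucasU_double_even k : lucasU x (k + k) = x * lucasU x k ^+ 2.
Proof.
case: k => [|k]; first by rewrite /= expr0n mulr0.
rewrite addSn lucasU_add lucasU_SS.
transitivity (x * lucasU x k.+1 ^+ 2 + (lucasU x k.+1 * lucasU x k) * 2%:R);
  first by ring.
by rewrite (pcharf0 char2) mulr0 addr0.
Qed.

Lemma lucasU_sum_inv (y z : R) j : y * z = 1 ->
  (y + z) * lucasU (y + z) j = y ^+ j + z ^+ j.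
Proof.
move=> yz; elim/ltn_ind: j => -[|[|j]] IH.
- by rewrite mulr0 !expr0 (addrr_pchar2 char2).
- by rewrite mulr1 !expr1.
have Ez : y * z ^+ j.+1 = z ^+ j by rewrite exprS mulrA yz mul1r.
have Ey : z * y ^+ j.+1 = y ^+ j by rewrite exprS mulrA (mulrC z) yz mul1r.
rewrite lucasU_SS mulrDr mulrA -(mulrA _ _ (lucasU _ _)) !IH //.
transitivity (y ^+ j.+2 + z ^+ j.+2 + (y * z ^+ j.+1 + z * y ^+ j.+1)
              + (y ^+ j + z ^+ j)); first by rewrite !exprS; ring.
by rewrite Ez Ey (addrC (z ^+ j)) -addrA (addrr_pchar2 char2) addr0.
Qed.

End LucasChar2.

Lemma lucasU_pow2_root (R : idomainType) (x : R) r M : 2 \in [pchar R] ->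
  lucasU x (2 ^ r * M) = 0 -> (x = 0 /\ (0 < r)%N) \/ lucasU x M = 0.
Proof.
move=> char2; elim: r => [|r IH]; first by rewrite mul1n; right.
rewrite expnS -mulnA mul2n -addnn lucasU_double_even // => /eqP.
rewrite mulf_eq0 expf_eq0 /= => /orP[/eqP ->|/eqP /IH]; first by left.
by case=> [[x0 _]|]; [left|right].
Qed.

Lemma rmorph_lucasU (R S : nzRingType) (f : {rmorphism R -> S}) x k :
  f (lucasU x k) = lucasU (f x) k.
Proof.
elim/ltn_ind: k => -[|[|k]] IH; rewrite ?rmorph0 ?rmorph1 //.
by rewrite !lucasU_SS rmorphD rmorphM !IH.
Qed.

Lemma horner_lucasU (R : comNzRingType) (x : R) k : (lucasU 'X k).[x] = lucasU x k.
Proof.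
elim/ltn_ind: k => -[|[|k]] IH; rewrite ?horner0 ?hornerC //.
by rewrite !lucasU_SS hornerD hornerM hornerX !IH.
Qed.

Lemma size_lucasU (R : nzRingType) k : size (lucasU ('X : {poly R}) k) = k.
Proof.
elim/ltn_ind: k => -[|[|k]] IH; rewrite ?size_poly0 ?size_poly1 //.
have szXU : size ('X * lucasU ('X : {poly R}) k.+1) = k.+2.
  by rewrite -commr_polyX size_mulX -?size_poly_eq0 IH.
by rewrite lucasU_SS size_polyDl szXU // IH.
Qed.

Lemma lucasU_solution (R : comPzRingType) (x : R) (g : nat -> R) N :
  g 0%N = 0 -> (forall j, (j < N)%N -> g j.+2 = x * g j.+1 + g j) ->
  forall k, (k <= N.+1)%N -> g k = g 1%N * lucasU x k.
Proof.
move=> g0 rec; elim/ltn_ind => -[|[|k]] IH kN; rewrite ?g0 ?mulr0 ?mulr1 //.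
by rewrite rec ?lucasU_SS ?(IH k.+1) ?(IH k) //; [ring | lia..].
Qed.

Section LucasWRoots.
Variables (L : fieldType) (theta : L) (k : nat).
Hypothesis char2 : 2 \in [pchar L].
Hypothesis prim : ((k + k).+1).-primitive_root theta.

Lemma prim_theta_neq0 : theta != 0.
Proof.
apply/eqP => t0; have := prim_expr_order prim; rewrite t0 expr0n /=.
by move/eqP; rewrite eq_sym oner_eq0.
Qed.

Lemma prim_theta_exp_neq1 i : (0 < i <= k + k)%N -> theta ^+ i != 1.
Proof.
move=> /andP[i0 ik]; rewrite -(prim_order_dvd prim); apply/negP => /dvdn_leq.
lia.
Qed.

Lemma lucasW_theta_root i : (1 <= i <= k)%N ->
  lucasW (theta ^+ i + theta ^- i) k = 0.
Proof.
move=> /andP[i1 ik]; set y := theta ^+ i; set z := theta ^- i.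
have y0 : y != 0 by rewrite expf_neq0 // prim_theta_neq0.
have yz : y * z = 1 by rewrite /z divff.
have yzk : y ^+ k.+1 * y ^+ k = 1.
  by rewrite -exprD addSn /y -exprM mulnC exprM (prim_expr_order prim) expr1n.
have yz_neq0 : y + z != 0.
  apply/eqP => /(pchar2_add_eq0 char2) zy.
  have i2 : (0 < i * 2 <= k + k)%N by lia.
  have : y ^+ 2 = 1 by rewrite expr2 {2}zy yz.
  by rewrite /y -exprM => /eqP; rewrite (negbTE (prim_theta_exp_neq1 i2)).
have zk : z ^+ k = y ^+ k.+1.
  by rewrite /z exprVn -[RHS]mulr1 -(divff (expf_neq0 k y0)) mulrA yzk mul1r.
have zk1 : z ^+ k.+1 = y ^+ k.
  rewrite /z exprVn -[RHS]mulr1 -(divff (expf_neq0 k.+1 y0)) mulrA.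
  by rewrite (mulrC (y ^+ k)) yzk mul1r.
suff : (y + z) * lucasW (y + z) k = 0.
  by move/eqP; rewrite mulf_eq0 (negbTE yz_neq0) => /eqP.
rewrite /lucasW mulrDr !lucasU_sum_inv // zk zk1 (addrC (y ^+ k)) -addrA addrA.
by rewrite addrr_pchar2 // add0r addrr_pchar2.
Qed.

Lemma theta_sum_inj i j : (1 <= i <= k)%N -> (1 <= j <= k)%N ->
  theta ^+ i + theta ^- i = theta ^+ j + theta ^- j -> i = j.
Proof.
move=> /andP[i1 ik] /andP[j1 jk] e.
set yi := theta ^+ i in e; set yj := theta ^+ j in e.
have yi0 : yi != 0 by rewrite expf_neq0 // prim_theta_neq0.
have yj0 : yj != 0 by rewrite expf_neq0 // prim_theta_neq0.
(* (yi + yj)(1 + 1/(yi yj)) = (yi + 1/yi) + (yj + 1/yj) = 0 *)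
have : (yi + yj) * (1 + yi^-1 * yj^-1) = 0.
  have -> : (yi + yj) * (1 + yi^-1 * yj^-1)
           = (yi + yi^-1) + (yj + yj^-1) + yi * yi^-1 * yj^-1 + yj * yj^-1 * yi^-1
             - yi^-1 - yj^-1 by ring.
  by rewrite e !divff // !mul1r addrr_pchar2 // add0r addrK subrr.
move/eqP; rewrite mulf_eq0 => /orP[] /eqP /(pchar2_add_eq0 char2).
  move/eqP; rewrite /yi /yj (eq_prim_root_expr prim) !modn_small ?ltnS ?leq_addr;
    [by move/eqP | lia | lia].
move=> inv.
have : yi * yj = 1 by rewrite -[yi * yj]mulr1 inv mulrACA !divff // mul1r.
have ij : (0 < i + j <= k + k)%N by lia.
by rewrite /yi /yj -exprD => /eqP; rewrite (negbTE (prim_theta_exp_neq1 ij)).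
Qed.

Lemma lucasW_roots x : lucasW x k = 0 ->
  exists2 i, (1 <= i <= k)%N & x = theta ^+ i + theta ^- i.
Proof.
move=> Wx; pose c i := theta ^+ i + theta ^- i.
have [/existsP[i /andP[i0 /eqP ->]]|] :=
  boolP [exists i : 'I_k.+1, (0 < i)%N && (x == c i)].
  by exists i; rewrite // i0 -ltnS ltn_ord.
rewrite negb_exists => /forallP x_not_c; exfalso.
pose W : {poly L} := lucasW 'X k.
have szW : size W = k.+1 by rewrite size_polyDl !size_lucasU.
have W0 : W != 0 by rewrite -size_poly_eq0 szW.
have rootW t : root W t = (lucasW t k == 0).
  by rewrite /root /W /lucasW hornerD !horner_lucasU.
(* W of degree k would have the k + 1 distinct roots x, c 1, ..., c k. *)
suff : (k.+1 < k.+1)%N by rewrite ltnn.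
have := max_poly_roots (rs := x :: map c (iota 1 k)) W0.
rewrite szW /= size_map size_iota; apply.
  rewrite rootW Wx eqxx /=; apply/allP => y /mapP[i]; rewrite mem_iota => ir ->.
  by rewrite rootW /c lucasW_theta_root ?eqxx //; lia.
apply/andP; split.
  apply/mapP => -[i]; rewrite mem_iota => /andP[i1 ik] xe.
  have := x_not_c (Ordinal (n := k.+1) (m := i) ltac:(lia)).
  by rewrite /= i1 xe eqxx.
rewrite map_inj_in_uniq ?iota_uniq // => i j.
by rewrite !mem_iota => hi hj; apply: theta_sum_inj; lia.
Qed.

End LucasWRoots.

(* The hypotheses of the theorem on a / b say exactly that (a + 1) / b is not
   a root of U_(N+1): write N + 1 = 2^r (2k + 1); by the doubling formulas a
   root of U_(N+1) is either 0 (so a = 1, excluded when r > 0) or a root of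
   U_(2k+1) = W_k^2, i.e. (a + 1) / b = theta^i + theta^-i, also excluded. *)
Lemma lucasU_nondegenerate (K : fieldType) (a b : K) (N r m : nat)
  (L : fieldType) (iota : {rmorphism K -> L}) (theta : L)
  (char2 : 2 \in [pchar K]) (hb : b != 0)
  (hr2 : ~~ (2 ^ r.+1 %| N.+1)%N) (hm : N.+1 = (2 ^ r * m.+1)%N)
  (htheta : (m.+1).-primitive_root theta)
  (hcond0 : r = 0%N -> forall i : nat, (1 <= i <= m./2)%N ->
      iota (a / b) != iota (1 / b) + theta ^+ i + theta ^- i)
  (hcond1 : (1 <= r)%N -> m = 0%N -> a != 1)
  (hcond2 : (1 <= r)%N -> (1 <= m)%N ->
      iota (a / b) != iota (1 / b) /\
      (forall i : nat, (1 <= i <= m./2)%N ->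
         iota (a / b) != iota (1 / b) + theta ^+ i + theta ^- i)) :
  lucasU ((a + 1) / b) N.+1 != 0.
Proof.
have char2L : 2 \in [pchar L] := rmorph_pchar iota char2.
have m_even : ~~ odd m.
  apply/negP => m_odd; move: hr2; rewrite hm expnS mulnC dvdn_pmul2l ?expn_gt0 //.
  by rewrite dvdn2 /= m_odd.
set k := m./2.
have mk : m = (k + k)%N by rewrite addnn -{1}(odd_double_half m) (negbTE m_even).
apply/eqP; rewrite hm => /(lucasU_pow2_root char2) [[x0 r1]|].
  have a1 : a = 1.
    apply: (pchar2_add_eq0 char2); move/eqP: x0.
    by rewrite mulf_eq0 invr_eq0 (negbTE hb) orbF => /eqP.
  have [m0|m1] := posnP m; first by move: (hcond1 r1 m0); rewrite a1 eqxx.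
  by case: (hcond2 r1 m1) => /negP; rewrite a1 eqxx.
rewrite mk lucasU_double_odd // => /eqP; rewrite expf_eq0 /= => /eqP W0.
have W0L : lucasW (iota ((a + 1) / b)) k = 0.
  by rewrite /lucasW -!rmorph_lucasU -rmorphD -/(lucasW _ k) W0 rmorph0.
rewrite mk in htheta.
have [i ik e] := lucasW_roots char2L htheta W0L.
have e' : iota (a / b) = iota (1 / b) + theta ^+ i + theta ^- i.
  by rewrite -addrA -e mulrDl rmorphD addrC -addrA addrr_pchar2 // addr0.
have [r0|r1] := posnP r; first by move/negP: (hcond0 r0 i ik); rewrite e'.
have m1 : (1 <= m)%N by move: ik; rewrite mk; lia.
by case: (hcond2 r1 m1) => _ /(_ i ik) /negP; rewrite e'.
Qed.

(* The entries of v : 'rV_N as a sequence indexed from 1, padded with zeros: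
   padded v 0 = 0, padded v (i + 1) = v_i, padded v k = 0 for k > N. *)
Definition padded (R : nmodType) (N : nat) (v : 'rV[R]_N) (k : nat) : R :=
  \sum_(i < N) (if i.+1 == k then v 0 i else 0).

Section Padded.
Variables (R : nmodType) (N : nat) (v : 'rV[R]_N).

Lemma padded0 : padded v 0 = 0.
Proof. by rewrite /padded big1. Qed.

Lemma paddedS (i : 'I_N) : padded v i.+1 = v 0 i.
Proof.
rewrite /padded (bigD1 i) //= eqxx big1 ?addr0 // => j ji.
by rewrite eqSS (inj_eq val_inj) (negbTE ji).
Qed.

Lemma padded_out k : (N < k)%N -> padded v k = 0.
Proof.
by move=> Nk; rewrite /padded big1 // => i _; rewrite ifN //; have := ltn_ord i; lia.
Qed.

End Padded.

Lemma mul_hatT_entry (K : fieldType) N (a b : K) (v : 'rV[K]_N) (j : 'I_N) :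
  (v *m hatT N a b) 0 j = a * padded v j.+1 + b * (padded v j + padded v j.+2).
Proof.
rewrite !mxE /padded mulr_sumr mulrDr mulr_sumr mulr_sumr -!big_split /=.
apply: eq_bigr => i _; rewrite mxE !eqSS -(inj_eq val_inj) /=.
have [->|ij] := eqVneq (i : nat) j.
  by rewrite ifN 1?ifN ?mulr0 ?addr0 1?mulrC //; lia.
rewrite mulr0 add0r; have [->|ij1] := eqVneq (i : nat) j.+1.
  by rewrite orbT ifN ?mulr0 ?add0r 1?mulrC //; lia.
rewrite orbF mulr0 addr0.
by case: eqP; rewrite ?mulr0 // mulrC.
Qed.

Lemma tr_hatT (K : fieldType) N (a b : K) : (hatT N a b)^T = hatT N a b.
Proof.
by apply/matrixP => i j; rewrite !mxE eq_sym [(_ || _)%N]orbC.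
Qed.

Section TridiagonalLCD.
Variables (K : fieldType) (N : nat) (a b : K).
Hypotheses (char2 : 2 \in [pchar K]) (hb : b != 0).
Hypothesis hU : lucasU ((a + 1) / b) N.+1 != 0.

(* 1 + \hat T_N(a, b) is nonsingular: the padded entries of a kernel vector
   satisfy the Lucas recurrence with x = (a + 1) / b and vanish at both ends,
   so they are multiples of U_k(x) killed by U_(N+1)(x) != 0. *)
Lemma hatT_kernel (v : 'rV[K]_N) : v *m (1%:M + hatT N a b) = 0 -> v = 0.
Proof.
move=> hv; set x := (a + 1) / b.
have rec j : (j < N)%N -> padded v j.+2 = x * padded v j.+1 + padded v j.
  move=> jN; have := congr1 (fun M : 'M[K]_(1, N) => M 0 (Ordinal jN)) hv.
  rewrite mulmxDr mulmx1 mxE mul_hatT_entry -(paddedS v (Ordinal jN)) mxE /= => E.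
  apply: (mulfI hb).
  have -> : b * (x * padded v j.+1 + padded v j)
            = (a + 1) * padded v j.+1 + b * padded v j by rewrite /x; field.
  by apply: (pchar2_add_eq0 char2); rewrite -[RHS]E; ring.
have solU := lucasU_solution (padded0 v) rec.
have pv1 : padded v 1 = 0.
  have := solU N.+1 (leqnn _); rewrite padded_out // => /esym/eqP.
  by rewrite mulf_eq0 (negbTE hU) orbF => /eqP.
apply/rowP => i; rewrite mxE -paddedS solU ?pv1 ?mul0r //.
by have := ltn_ord i; lia.
Qed.

(* \hat C_N(a, b) is LCD over K: its Gram matrix G G^T = 1 + T^2 is
   (1 + T)^2 in characteristic 2, hence nonsingular. *)
Lemma hatC_is_LCD : is_LCD (hatC N a b).
Proof.
move=> _ [u ->] orth; set T := hatT N a b.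
have gram : row_mx 1%:M T *m (row_mx 1%:M T)^T = (1%:M + T) *m (1%:M + T).
  rewrite tr_row_mx tr_scalar_mx tr_hatT mul_row_col mulmx1 mulmxDl !mulmxDr.
  rewrite !mul1mx mulmx1 -!addrA; congr (_ + _).
  by rewrite addrA -mulr2n -scaler_nat (pcharf0 char2) scale0r add0r.
suff -> : u = 0 by rewrite mul0mx.
apply: hatT_kernel; apply: hatT_kernel; rewrite -mulmxA -gram mulmxA.
by apply: dotF_nondeg => w; rewrite -dotF_mulmxr orth //; exists w.
Qed.

End TridiagonalLCD.

Lemma hatC_scale (K : fieldType) N (a b : K) l c :
  hatC N a b c -> hatC N a b (l *: c).
Proof. by case=> u ->; exists (l *: u); rewrite scalemxAl. Qed.

Lemma hatC_encoder_inj (K : fieldType) N (a b : K) (u : 'rV[K]_N) :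
  u *m row_mx 1%:M (hatT N a b) = 0 -> u = 0.
Proof. by move/eqP; rewrite mul_mx_row row_mx_eq0 mulmx1 => /andP[/eqP]. Qed.

Lemma eq_on_basis (F : fieldType) (vT : vectType F) (V : lmodType F) n
  (X : n.-tuple vT) (f g : vT -> V) :
  basis_of fullv X ->
  (forall u v, f (u + v) = f u + f v) -> (forall c u, f (c *: u) = c *: f u) ->
  (forall u v, g (u + v) = g u + g v) -> (forall c u, g (c *: u) = c *: g u) ->
  (forall i : 'I_n, f X`_i = g X`_i) -> forall x, f x = g x.
Proof.
move=> bX fD fZ gD gZ fg x.
have f0 : f 0 = 0 by rewrite -(scale0r 0) fZ scale0r.
have g0 : g 0 = 0 by rewrite -(scale0r 0) gZ scale0r.
rewrite (coord_basis bX (memvf x)) (big_morph f fD f0) (big_morph g gD g0).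
by apply: eq_bigr => i _; rewrite fZ gZ fg.
Qed.

(* The absolute trace Tr_(K/F) of an extension of a finite field is
   F-linear: each #|F|^i is a power of the characteristic (so x |-> x^(#|F|^i)
   is additive) and fixes F. *)
Section Trace.
Variables (F : finFieldType) (K : fieldExtType F).

Lemma pchar_nat_card_pow i : [pchar K].-nat (#|F| ^ i)%N.
Proof.
have [p p_pr charFp] := finPcharP F.
by rewrite (card_pprimeChar charFp) -expnM pnatX pnatE // (pchar_lalg K) charFp.
Qed.

Lemma trKD (x y : K) : trK (x + y) = trK x + trK y.
Proof.
rewrite /trK -big_split; apply: eq_bigr => i _.
exact/exprDn_pchar/pchar_nat_card_pow.
Qed.

Lemma trK0 : trK (0 : K) = 0.
Proof. by apply: (addrI (trK 0)); rewrite -trKD !addr0. Qed.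

Lemma trKZ (c : F) (x : K) : trK (c *: x) = c *: trK x.
Proof.
rewrite /trK scaler_sumr; apply: eq_bigr => i _.
have fixF : (c%:A : K) ^+ (#|F| ^ i) = c%:A.
  elim: (i : nat) => [|j IH]; first by rewrite expr1.
  by rewrite expnSr exprM IH -in_algE -rmorphXn expf_card.
by rewrite -mulr_algl exprMn fixF mulr_algl.
Qed.

Lemma trK_sum I (r : seq I) (P : pred I) (f : I -> K) :
  trK (\sum_(i <- r | P i) f i) = \sum_(i <- r | P i) trK (f i).
Proof. exact: (big_morph _ trKD trK0). Qed.

Variables (n : nat) (pi : {linear K -> 'rV[F]_n}).
Hypothesis hpi : is_isometry pi.

Lemma trace_dual_basis (e e' : (\dim {:K}).-tuple K) :
  (forall i j, trK (tnth e i * tnth e' j) = (i == j)%:R) -> basis_of fullv e'.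
Proof.
move=> hte; rewrite basisEfree subvf size_tuple leqnn !andbT; apply/freeP => k hk i.
have : trK (e`_i * \sum_(j < \dim {:K}) k j *: e'`_j) = 0 by rewrite hk mulr0 trK0.
rewrite mulr_sumr trK_sum (bigD1 i) //= big1 => [|j ji].
  rewrite addr0 -scalerAr trKZ -!tnth_nth hte eqxx => /eqP.
  by rewrite scaler_eq0 oner_eq0 orbF => /eqP.
by rewrite -scalerAr trKZ -!tnth_nth hte eq_sym (negbTE ji) scaler0.
Qed.

(* An isometry turns the standard inner product into the trace form:
   <pi x, pi y> = Tr(x y).  Both sides are F-bilinear and agree on the
   pairs (e_i, e'_j) of trace-dual basis vectors. *)
Lemma isometry_trace (x y : K) : (dotF (pi x) (pi y))%:A = trK (x * y).
Proof.
case: hpi => e [e' [be hte hde]]; have be' := trace_dual_basis hte.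
pose lhs (y x : K) := (dotF (pi x) (pi y))%:A : K.
pose rhs (y x : K) := trK (x * y).
have on_dual (j : 'I_(\dim {:K})) x' : lhs e'`_j x' = rhs e'`_j x'.
  apply: (eq_on_basis be) => [u v|c u|u v|c u|i] {x'}.
  - by rewrite /lhs linearD dotFDl scalerDl.
  - by rewrite /lhs linearZ dotFZl scalerA.
  - by rewrite /rhs mulrDl trKD.
  - by rewrite /rhs -scalerAl trKZ.
  - by rewrite /lhs /rhs -(tnth_nth 0 e) -(tnth_nth 0 e') hde hte -in_algE rmorph_nat.
apply: (eq_on_basis be' (f := lhs^~ x) (g := rhs^~ x)) => [u v|c u|u v|c u|j].
- by rewrite /lhs linearD dotFC dotFDl scalerDl !(dotFC (pi x)).
- by rewrite /lhs linearZ dotFC dotFZl scalerA dotFC.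
- by rewrite /rhs mulrDr trKD.
- by rewrite /rhs -scalerAr trKZ.
- exact: on_dual.
Qed.

(* The trace form is nondegenerate (the dual-basis relations exhibit an
   element of trace 1), hence an isometry is injective. *)
Lemma trace_nondeg (z : K) : (forall l, trK (l * z) = 0) -> z = 0.
Proof.
move=> tz; apply/eqP; apply: contraT => z0.
case: hpi => e [e' [_ hte _]].
have : (0 < \dim {:K})%N by rewrite adim_gt0.
case: (\dim {:K}) e e' hte => // d e e' hte _.
have /eqP[] : trK (tnth e ord0 * tnth e' ord0) != 0 by rewrite hte eqxx oner_eq0.
by rewrite -(divfK z0 (_ * _)) tz.
Qed.

Lemma isometry_inj (x : K) : pi x = 0 -> x = 0.
Proof.
move=> px; apply: trace_nondeg => l; rewrite mulrC -isometry_trace px.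
by rewrite /dotF big1 ?scale0r // => i _; rewrite mxE mul0r.
Qed.

End Trace.

Lemma sum_mxvec (V : nmodType) m n (f : 'I_(m * n) -> V) :
  \sum_t f t = \sum_(i < m) \sum_(j < n) f (mxvec_index i j).
Proof.
rewrite (reindex _ (curry_mxvec_bij _ _)) /= pair_bigA.
by apply: eq_bigr => -[i j].
Qed.

Lemma wtE (R : zmodType) m (v : 'rV[R]_m) : wt v = (\sum_t (v ord0 t != 0%R))%N.
Proof.
rewrite /wt cardsE -sum1_card big_mkcond /=.
by apply: eq_bigr => t _; rewrite unfold_in /=; case: (v ord0 t != 0%R).
Qed.

Lemma exists_least_nat (P : nat -> Prop) : (exists n, P n) ->
  exists n, P n /\ forall m, P m -> (n <= m)%N.
Proof.
move=> [n Pn]; elim/ltn_ind: n Pn => n IH Pn.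
have [[m [Pm mn]]|nomin] := classic (exists m, P m /\ (m < n)%N).
  exact: IH mn Pm.
exists n; split => // m Pm; rewrite leqNgt; apply/negP => mn.
by apply: nomin; exists m.
Qed.

Lemma min_dist_exists (R : zmodType) m (C : 'rV[R]_m -> Prop) c :
  C c -> c != 0 -> exists D, is_min_dist C D.
Proof.
move=> Cc c0.
have [D [[v [Cv v0 <-]] Dmin]] :=
  exists_least_nat (P := fun w => exists v, [/\ C v, v != 0 & wt v = w])
                   (ex_intro _ _ (ex_intro _ c (And3 Cc c0 erefl))).
by exists (wt v); split; [exists v | move=> u Cu u0; apply: Dmin; exists u].
Qed.

Section Expansion.
Variables (F : finFieldType) (K : fieldExtType F) (n : nat).
Variable pi : {linear K -> 'rV[F]_n}.

Lemma piTE M (c : 'rV[K]_M) i k : piT pi c 0 (mxvec_index i k) = pi (c 0 i) 0 k.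
Proof. by rewrite /piT mxvecE mxE. Qed.

Lemma piT0 M : piT pi (0 : 'rV[K]_M) = 0.
Proof.
apply/rowP => t; case/mxvec_indexP: t => i k.
by rewrite piTE !mxE linear0 mxE.
Qed.

Lemma piT_linear M (c : F) (w w' : 'rV[K]_M) :
  piT pi (c%:A *: w + w') = c *: piT pi w + piT pi w'.
Proof.
apply/rowP => t; case/mxvec_indexP: t => i j.
by rewrite !mxE !piTE !mxE mulr_algl linearP !mxE.
Qed.

Lemma wt_piT M (c : 'rV[K]_M) : wt (piT pi c) = (\sum_i wt (pi (c ord0 i)))%N.
Proof.
rewrite wtE sum_mxvec; apply: eq_bigr => i _; rewrite wtE.
by apply: eq_bigr => k _; rewrite piTE.
Qed.

Lemma wt_piT_ge M d (c : 'rV[K]_M) :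
  (forall x, x != 0 -> (d <= wt (pi x))%N) -> (d * wt c <= wt (piT pi c))%N.
Proof.
move=> dpi; rewrite wt_piT wtE big_distrr /=; apply: leq_sum => i _.
by have [->|ci] := eqVneq (c ord0 i) 0; rewrite ?muln0 // muln1 dpi.
Qed.

Hypothesis hpi : is_isometry pi.

Lemma dotF_piT M (c c' : 'rV[K]_M) :
  (dotF (piT pi c) (piT pi c'))%:A = trK (dotF c c').
Proof.
rewrite /dotF sum_mxvec trK_sum scaler_suml; apply: eq_bigr => i _.
rewrite -(isometry_trace hpi); congr (_%:A); rewrite /dotF.
by apply: eq_bigr => k _; rewrite !piTE.
Qed.

Lemma piT_inj M (c : 'rV[K]_M) : piT pi c = 0 -> c = 0.
Proof.
move=> c0; apply/rowP => i; rewrite mxE; apply: (isometry_inj hpi).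
by apply/rowP => k; rewrite mxE -piTE c0 mxE.
Qed.

(* The isometric image of a K-linear LCD code is LCD over F: if pi^(M) c is
   orthogonal to the image, then Tr(l <c, c'>) = <pi^(M) c, pi^(M) (l c')> = 0
   for all l and codewords c', so <c, c'> = 0 by nondegeneracy of the trace
   form, and c = 0. *)
Lemma piT_LCD M (C : 'rV[K]_M -> Prop) :
  (forall l c, C c -> C (l *: c)) -> is_LCD C -> is_LCD (map_code (piT pi) C).
Proof.
move=> CZ C_LCD _ [c [Cc ->]] orth.
suff -> : c = 0 by rewrite piT0.
apply: C_LCD => // c' Cc'; apply: (trace_nondeg hpi) => l.
rewrite dotFC -dotFZl dotFC -dotF_piT orth ?scale0r //.
by exists (l *: c'); split; first exact: CZ.
Qed.

Lemma image_code_wt_ge d :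
  is_min_dist (image_code pi) d -> forall x, x != 0 -> (d <= wt (pi x))%N.
Proof.
move=> [_ dmin] x x0; apply: dmin; first by exists x.
by apply: contra_neq x0 => /(isometry_inj hpi).
Qed.

Lemma piT_min_dist M (C : 'rV[K]_M -> Prop) d D :
  is_min_dist (image_code pi) d -> is_min_dist C D ->
  exists Dstar, is_min_dist (map_code (piT pi) C) Dstar /\ (d * D <= Dstar)%N.
Proof.
move=> hd [[c [Cc c0 _]] Dmin].
have Cpc : map_code (piT pi) C (piT pi c) by exists c.
have pc0 : piT pi c != 0 by apply: contra_neq c0 => /piT_inj.
have [Dstar hDstar] := min_dist_exists Cpc pc0.
exists Dstar; split => //; case: hDstar => [[_ [[c' [Cc' ->]] v0 <-]] _].
have c'0 : c' != 0 by apply: contra_neq v0 => ->; rewrite piT0.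
apply: leq_trans (wt_piT_ge c' (image_code_wt_ge hd)).
by rewrite leq_mul2l Dmin ?orbT.
Qed.

End Expansion.

(* F-coordinates of vectors of K^k: x in F^(s k) is read as k blocks of
   coordinates in the F-basis e of K. *)
Definition rV_of_coords (F : fieldType) (K : fieldExtType F) s k
    (e : s.-tuple K) (x : 'rV[F]_(s * k)) : 'rV[K]_k :=
  \row_i \sum_j x 0 (mxvec_index j i) *: e`_j.

Section Coordinates.
Variables (F : fieldType) (K : fieldExtType F) (s k : nat) (e : s.-tuple K).

Lemma rV_of_coords_linear (c : F) (x y : 'rV[F]_(s * k)) :
  rV_of_coords e (c *: x + y) = c%:A *: rV_of_coords e x + rV_of_coords e y.
Proof.
apply/rowP => i; rewrite !mxE mulr_sumr -big_split; apply: eq_bigr => j _.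
by rewrite !mxE scalerDl -scalerA mulr_algl.
Qed.

Hypothesis be : basis_of fullv e.

Lemma rV_of_coords_eq0 (x : 'rV[F]_(s * k)) : rV_of_coords e x = 0 -> x = 0.
Proof.
move=> x0; apply/rowP => t; case/mxvec_indexP: t => j i; rewrite mxE.
have := congr1 (fun u : 'rV[K]_k => u 0 i) x0; rewrite !mxE.
by move/(freeP (basis_free be)) => ->.
Qed.

Lemma rV_of_coords_onto (u : 'rV[K]_k) :
  u = rV_of_coords e (mxvec (\matrix_(j, i) coord e j (u 0 i))).
Proof.
apply/rowP => i; rewrite mxE {1}(coord_basis be (memvf (u 0 i))).
by apply: eq_bigr => j _; rewrite mxvecE mxE.
Qed.

End Coordinates.

(* If u |-> u G is injective, the expansion of the K-linear code with
   generator matrix G : 'M[K]_(k, M) is an F-linear code of dimension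
   [K : F] k: its generator matrix is that of the injective F-linear map
   x |-> pi^(M)(u(x) G), u(x) the vector with F-coordinates x. *)
Lemma piT_generator (F : finFieldType) (K : fieldExtType F) n
  (pi : {linear K -> 'rV[F]_n}) k M (G : 'M[K]_(k, M)) :
  is_isometry pi -> (forall u : 'rV[K]_k, u *m G = 0 -> u = 0) ->
  exists B : 'M[F]_(\dim {:K} * k, M * n),
    \rank B = (\dim {:K} * k)%N /\
    (forall v, map_code (piT pi) (fun c => exists u, c = u *m G) v
               <-> exists x, v = x *m B).
Proof.
move=> hpi G_inj; have [e [e' [be _ _]]] := hpi.
pose Phi x := piT pi (rV_of_coords e x *m G).
have Phi_linear : linear Phi.
  by move=> c x y; rewrite /Phi rV_of_coords_linear mulmxDl -scalemxAl piT_linear.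
pose PhiL : {linear 'rV[F]_(\dim {:K} * k) -> 'rV[F]_(M * n)} :=
  HB.pack Phi (GRing.isLinear.Build _ _ _ _ Phi Phi_linear).
exists (lin1_mx PhiL); split.
  apply/eqP; rewrite -[_ == _]/(row_free _) -kermx_eq0.
  apply/rowV0P => x /sub_kermxP; rewrite mul_rV_lin1 /= /Phi.
  by move/(piT_inj hpi)/G_inj/(rV_of_coords_eq0 be).
move=> v; split.
  case=> c [[u ->] ->]; rewrite (rV_of_coords_onto be u).
  by eexists; rewrite mul_rV_lin1.
case=> x ->; rewrite mul_rV_lin1 /=.
by exists (rV_of_coords e x *m G); split => //; exists (rV_of_coords e x).
Qed.

Unset Implicit Arguments. Set Strict Implicit.

Theorem theorem3p2
  (F : finFieldType) (K : fieldExtType F) (s n : nat)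
  (char2 : 2%N \in [pchar F])
  (hs : (2 <= s)%N) (hK : \dim {:K} = s) (hn : (s <= n)%N)
  (pi : {linear K -> 'rV[F]_n}) (d : nat)
  (hpi : is_isometry pi)
  (hd : is_min_dist (image_code pi) d)
  (hdmax : forall (pi' : {linear K -> 'rV[F]_n}) (d' : nat),
      is_isometry pi' -> is_min_dist (image_code pi') d' -> (d' <= d)%N)
  (hd1 : (1 <= d)%N)
  (a b : K) (hb : b != 0) (N : nat) (hN : (2 <= N)%N)
  (r m : nat)
  (hr1 : (2 ^ r %| N.+1)%N) (hr2 : ~~ (2 ^ r.+1 %| N.+1)%N)
  (hm : N.+1 = (2 ^ r * m.+1)%N)
  (L : fieldType) (iota : {rmorphism K -> L}) (theta : L)
  (htheta : (m.+1).-primitive_root theta)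
  (hcond0 : r = 0%N -> forall i : nat, (1 <= i <= m./2)%N ->
      iota (a / b) != iota (1 / b) + theta ^+ i + theta ^- i)
  (hcond1 : (1 <= r)%N -> m = 0%N -> a != 1)
  (hcond2 : (1 <= r)%N -> (1 <= m)%N ->
      iota (a / b) != iota (1 / b) /\
      (forall i : nat, (1 <= i <= m./2)%N ->
         iota (a / b) != iota (1 / b) + theta ^+ i + theta ^- i))
  (D : nat) (hD : is_min_dist (hatC N a b) D) :
  let C' := map_code (piT pi) (hatC N a b) in
  [/\ is_LCD C',
      (exists B : 'M[F]_(s * N, (N + N) * n),
          \rank B = (s * N)%N /\ (forall v, C' v <-> exists x, v = x *m B))
    & exists Dstar, is_min_dist C' Dstar /\ (d * D <= Dstar)%N].
Proof.
move=> C'; have char2K : 2 \in [pchar K] by rewrite (pchar_lalg K).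
have hU : lucasU ((a + 1) / b) N.+1 != 0 :=
  lucasU_nondegenerate char2K hb hr2 hm htheta hcond0 hcond1 hcond2.
split.
- apply: (piT_LCD hpi (@hatC_scale K N a b)).
  exact: hatC_is_LCD char2K hb hU.
- rewrite -hK; apply: (piT_generator hpi).
  exact: hatC_encoder_inj.
- exact: (piT_min_dist hpi hd hD).
Qed.
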